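(* Let $\mathcal{Y}$ be a finite set and let $\mathcal{P}$ be a finitely generated credal set of probability measures on $\mathcal{Y}$ with set of extreme points $\mathrm{ex}\,\mathcal{P}=\{P^{\text{ex}}_s\}_{s=1}^S$. Let $\Delta^{S-1}=\{\beta=(\beta_1,\ldots,\beta_S)^\top:\beta_s\ge0\ \forall s,\ \sum_s\beta_s=1\}$, $\underline{H}(P^{\text{ex}})=\min_{P^{\text{ex}}\in\mathrm{ex}\,\mathcal{P}}H(P^{\text{ex}})$, $\overline{H}(P^{\text{ex}})=\max_{P^{\text{ex}}\in\mathrm{ex}\,\mathcal{P}}H(P^{\text{ex}})$, and $$l[\mathrm{TU}(\mathcal{P})]=\max\Big\{\sup_{\beta\in\Delta^{S-1}}\sum_{s=1}^S\beta_sH(P^{\text{ex}}_s),\ \overline{H}(P^{\text{ex}})\Big\}.$$ Let $\mathrm{TU}(\mathcal{P})=\sup_{P\in\mathcal{P}}H(P)$, $\mathrm{AU}(\mathcal{P})=\inf_{P\in\mathcal{P}}H(P)$ and $\mathrm{EU}(\mathcal{P})=\mathrm{TU}(\mathcal{P})-\mathrm{AU}(\mathcal{P})$. Then $$\mathrm{TU}(\mathcal{P})\in\Big[l[\mathrm{TU}(\mathcal{P})],\ \sup_{\beta\in\Delta^{S-1}}\sum_{s=1}^S\beta_sH(P^{\text{ex}}_s)+\log_2(S)\Big],\qquad \mathrm{AU}(\mathcal{P})=\underline{H}(P^{\text{ex}}),$$ $$\mathrm{EU}(\mathcal{P})\in\Big[\max\{0,\ l[\mathrm{TU}(\mathcal{P})]-\underline{H}(P^{\text{ex}})\},\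 \sup_{\beta\in\Delta^{S-1}}\sum_{s=1}^S\beta_sH(P^{\text{ex}}_s)+\log_2(S)-\underline{H}(P^{\text{ex}})\Big].$$
   Context: A credal set is a closed convex set of probability measures; it is finitely generated if it has finitely many extreme points (elements not expressible as convex combinations of the others). For a probability measure $P$ on finite $\mathcal{Y}$, $H(P)=-\sum_{y\in\mathcal{Y}}P(\{y\})\log_2P(\{y\})$ is the Shannon entropy. *)

From HB Require Import structures.
From mathcomp Require Import all_boot all_order all_algebra.
From mathcomp Require Import all_classical all_reals all_analysis.
Set Implicit Arguments. Unset Strict Implicit. Unset Printing Implicit Defensive.
Import Order.TTheory GRing.Theory Num.Theory.
Local Open Scope classical_set_scope.
Local Open Scope ring_scope.

Section Defs.
Variables (R : realType).

Definition log2 (x : R) : R := ln x / ln 2.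

Definition entropy (Y : finType) (p : Y -> R) : R :=
  - \sum_(y : Y) (if p y == 0 then 0 else p y * log2 (p y)).

Definition is_prob (Y : finType) (p : Y -> R) : Prop :=
  (forall y, 0 <= p y) /\ \sum_(y : Y) p y = 1.

Definition simplex (S : nat) : set ('I_S -> R) :=
  [set b | (forall s, 0 <= b s) /\ \sum_(s < S) b s = 1].

Definition mix (Y : finType) (S : nat) (q : 'I_S -> Y -> R) (b : 'I_S -> R)
  : Y -> R := fun y => \sum_(s < S) b s * q s y.

Definition conv_hull (Y : finType) (S : nat) (q : 'I_S -> Y -> R) : set (Y -> R) :=
  [set mix q b | b in @simplex S].

Definition convex_set (Y : finType) (C : set (Y -> R)) : Prop :=
  forall p q t, C p -> C q -> 0 <= t <= 1 ->
    C (fun y => t * p y + (1 - t) * q y).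

Definition extreme_point (Y : finType) (C : set (Y -> R)) (x : Y -> R) : Prop :=
  C x /\
  ~ (exists (n : nat) (q : 'I_n -> Y -> R) (b : 'I_n -> R),
        (forall i, C (q i) /\ q i <> x) /\ @simplex n b /\ x = mix q b).

Definition TU (Y : finType) (C : set (Y -> R)) : R :=
  sup [set entropy p | p in C].
Definition AU (Y : finType) (C : set (Y -> R)) : R :=
  inf [set entropy p | p in C].
Definition EU (Y : finType) (C : set (Y -> R)) : R := TU C - AU C.

End Defs.
Arguments simplex : clear implicits.

(* Write H for the entropy and q_s for the extreme points. Since -x ln x lies
   below each of its tangents, H is concave: on the convex hull,
   H(sum_s b_s q_s) >= sum_s b_s H(q_s) >= min_s H(q_s). As the extreme points
   themselves lie in the hull, this gives AU and the lower bound on TU.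
   Conversely, -ln is antitone and b_s q_s(y) <= (sum_t b_t q_t)(y), whence
   H(sum_s b_s q_s) <= sum_s b_s H(q_s) + H(b): the entropy of the outcome is at
   most the joint entropy of the pair (s, outcome). Finally H(b) <= log2 S, the
   uniform distribution having maximal entropy. The injectivity of Pex and the
   description of the extreme points of C are not needed. *)

From HB Require Import structures.
From mathcomp Require Import all_boot all_order all_algebra.
From mathcomp Require Import all_classical all_reals all_analysis.
From mathcomp Require Import lra ring.
Import Order.TTheory GRing.Theory Num.Theory.
Local Open Scope classical_set_scope.
Local Open Scope ring_scope.

Set Implicit Arguments.
Unset Strict Implicit.

Section ElementaryInequalities.
Variable R : realType.
Implicit Types b x y p : R.

Lemma ln_le_subr1 x : 0 < x -> ln x <= x - 1.
Proof.
move=> x_gt0; have := @le_ln1Dx R (x - 1).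
by rewrite addrCA subrr addr0; apply; lra.
Qed.

Lemma xlnx_tangent x p : 0 <= x -> 0 < p -> - (x * ln x) <= x * - ln p - x + p.
Proof.
move=> x_ge0 p_gt0; have [->|x_neq0] := eqVneq x 0.
  by rewrite !(mul0r, oppr0, add0r) ltW.
have x_gt0 : 0 < x by rewrite lt0r x_neq0.
have := ler_wpM2l x_ge0 (ln_le_subr1 (divr_gt0 p_gt0 x_gt0)).
rewrite ln_div ?posrE // mulrBr mulrBr mulr1 mulrCA divff // mulr1; lra.
Qed.

Lemma mulr_xlnx_tangent b x p : 0 <= b -> 0 <= x -> b * x <= p ->
  b * - (x * ln x) <= b * (x * - ln p - x + p).
Proof.
move=> b_ge0 x_ge0 bx_le_p.
have [->|b_neq0] := eqVneq b 0; first by rewrite !mul0r.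
have [x0|x_neq0] := eqVneq x 0.
  rewrite x0 mulr0 in bx_le_p *.
  by rewrite !(mul0r, mulr0, oppr0, add0r) mulr_ge0.
apply/(ler_wpM2l b_ge0)/xlnx_tangent => //.
by apply: lt_le_trans bx_le_p; rewrite mulr_gt0 // lt0r ?b_neq0 ?x_neq0.
Qed.

Lemma ler_mul_lnN y p : 0 <= y -> y <= p -> y * - ln p <= y * - ln y.
Proof.
move=> y_ge0 y_le_p; have [->|y_neq0] := eqVneq y 0; first by rewrite !mul0r.
have y_gt0 : 0 < y by rewrite lt0r y_neq0.
by rewrite ler_wpM2l // lerN2 ler_ln ?posrE // (lt_le_trans y_gt0).
Qed.

Lemma mulr_lnM b x : 0 <= b -> 0 <= x ->
  b * x * ln (b * x) = b * x * ln b + b * (x * ln x).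
Proof.
move=> b_ge0 x_ge0; have [->|b_neq0] := eqVneq b 0; first by rewrite !mul0r addr0.
have [->|x_neq0] := eqVneq x 0; first by rewrite !(mulr0, mul0r) addr0.
rewrite lnM ?posrE ?lt0r ?b_neq0 ?x_neq0 //; ring.
Qed.

Lemma ler_sum_term (I : finType) (F : I -> R) i :
  (forall j, 0 <= F j) -> F i <= \sum_j F j.
Proof. by move=> F_ge0; rewrite (bigD1 i) //= lerDl sumr_ge0. Qed.

End ElementaryInequalities.

Section Entropy.
Variable R : realType.

Definition entropy_ln {Y : finType} (p : Y -> R) : R := - \sum_y p y * ln (p y).

Lemma entropyE (Y : finType) (p : Y -> R) : entropy p = entropy_ln p / ln 2.
Proof.
rewrite /entropy /entropy_ln /log2 mulNr mulr_suml; congr (- _).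
by apply: eq_bigr => y _; case: eqP => [->|_]; rewrite ?mul0r ?mulrA.
Qed.

Lemma is_prob_card_gt0 (Y : finType) (p : Y -> R) : is_prob p -> (0 < #|Y|)%N.
Proof.
case=> _ p_sum1; rewrite lt0n; apply: contra_eq_neq p_sum1 => /card0_eq Y0.
by rewrite big_pred0 // eq_sym oner_neq0.
Qed.

Lemma entropy_ln_ge0 (Y : finType) (p : Y -> R) : is_prob p -> 0 <= entropy_ln p.
Proof.
case=> p_ge0 p_sum1; rewrite /entropy_ln -sumrN sumr_ge0 // => y _.
rewrite -mulrN mulr_ge0 // oppr_ge0 ln_le0 // -p_sum1.
exact: ler_sum_term.
Qed.

Lemma entropy_ln_le_ln_card (Y : finType) (p : Y -> R) :
  is_prob p -> entropy_ln p <= ln #|Y|%:R.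
Proof.
move=> p_prob; have [p_ge0 p_sum1] := p_prob.
have n_gt0 : 0 < #|Y|%:R :> R by rewrite ltr0n (is_prob_card_gt0 p_prob).
rewrite /entropy_ln -sumrN.
apply: (@le_trans _ _ (\sum_y (p y * - ln #|Y|%:R^-1 - p y + #|Y|%:R^-1))).
  by apply: ler_sum => y _; rewrite xlnx_tangent ?invr_gt0.
rewrite lnV ?posrE // opprK !big_split /= -mulr_suml sumrN p_sum1 sumr_const.
by rewrite -[_^-1 *+ _]mulr_natr mulVf ?gt_eqF // mul1r subrK.
Qed.

Lemma ln2_gt0 : 0 < ln 2 :> R.
Proof. by rewrite ln_gt0 // ltr1n. Qed.

Lemma entropy_ge0 (Y : finType) (p : Y -> R) : is_prob p -> 0 <= entropy p.
Proof.
by move=> p_prob; rewrite entropyE divr_ge0 ?entropy_ln_ge0 ?ltW ?ln2_gt0.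
Qed.

Lemma entropy_le_log2_card (Y : finType) (p : Y -> R) :
  is_prob p -> entropy p <= log2 #|Y|%:R.
Proof.
move=> p_prob; rewrite entropyE /log2 ler_pM2r ?invr_gt0 ?ln2_gt0 //.
exact: entropy_ln_le_ln_card.
Qed.

Section Mixture.
Variables (Y : finType) (S : nat) (q : 'I_S -> Y -> R) (b : 'I_S -> R).
Hypotheses (q_ge0 : forall s y, 0 <= q s y) (b_simplex : simplex R S b).

Let b_ge0 := b_simplex.1.
Let b_sum1 := b_simplex.2.

Lemma is_prob_mix : (forall s, \sum_y q s y = 1) -> is_prob (mix q b).
Proof.
move=> q_sum1; split=> [y|].
  by rewrite sumr_ge0 // => s _; rewrite mulr_ge0.
rewrite /mix exchange_big /= -[RHS]b_sum1; apply: eq_bigr => s _.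
by rewrite -mulr_sumr q_sum1 mulr1.
Qed.

Lemma mix_ge_term s y : b s * q s y <= mix q b y.
Proof.
by apply: (ler_sum_term (F := fun s => b s * q s y)) => t; rewrite mulr_ge0.
Qed.

Lemma entropy_ln_mix_ge : \sum_s b s * entropy_ln (q s) <= entropy_ln (mix q b).
Proof.
rewrite /entropy_ln; under eq_bigr do rewrite -sumrN mulr_sumr.
rewrite exchange_big -sumrN; apply: ler_sum => y _ /=.
set p := mix q b y.
apply: (@le_trans _ _ (\sum_s b s * (q s y * - ln p - q s y + p))).
  by apply: ler_sum => s _; rewrite mulr_xlnx_tangent ?mix_ge_term.
suff -> : \sum_s b s * (q s y * - ln p - q s y + p) = - (p * ln p) by [].
transitivity (p * (- ln p - 1) + (\sum_s b s) * p); last by rewrite b_sum1; ring.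
rewrite [X in X * _](_ : p = \sum_s b s * q s y) // !mulr_suml -big_split /=.
by apply: eq_bigr => s _; ring.
Qed.

Lemma entropy_ln_mix_le : (forall s, \sum_y q s y = 1) ->
  entropy_ln (mix q b) <= \sum_s b s * entropy_ln (q s) + entropy_ln b.
Proof.
move=> q_sum1.
have bq_ge0 s y : 0 <= b s * q s y by rewrite mulr_ge0.
apply: (@le_trans _ _
  (\sum_y \sum_s (b s * q s y * - ln (b s) + b s * - (q s y * ln (q s y))))).
  rewrite /entropy_ln -sumrN; apply: ler_sum => y _.
  rewrite -mulrN {1}/mix mulr_suml; apply: ler_sum => s _.
  apply: le_trans (ler_mul_lnN (bq_ge0 s y) (mix_ge_term s y)) _.
  by rewrite mulrN mulr_lnM // opprD -!mulrN.
suff -> : \sum_y \sum_s (b s * q s y * - ln (b s) + b s * - (q s y * ln (q s y)))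
  = \sum_s b s * entropy_ln (q s) + entropy_ln b by [].
rewrite exchange_big addrC /entropy_ln -sumrN -big_split /=.
apply: eq_bigr => s _.
rewrite big_split /= -mulr_sumr sumrN.
under eq_bigr do rewrite mulrAC.
by rewrite -mulr_sumr q_sum1 mulr1 mulrN.
Qed.

Lemma sum_entropyE :
  \sum_s b s * entropy (q s) = (\sum_s b s * entropy_ln (q s)) / ln 2.
Proof. by rewrite mulr_suml; apply: eq_bigr => s _; rewrite entropyE mulrA. Qed.

Lemma entropy_mix_ge : \sum_s b s * entropy (q s) <= entropy (mix q b).
Proof.
by rewrite sum_entropyE entropyE ler_pM2r ?invr_gt0 ?ln2_gt0 ?entropy_ln_mix_ge.
Qed.

Lemma entropy_mix_le : (forall s, \sum_y q s y = 1) ->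
  entropy (mix q b) <= \sum_s b s * entropy (q s) + entropy b.
Proof.
move=> q_sum1; rewrite sum_entropyE !entropyE -mulrDl.
by rewrite ler_pM2r ?invr_gt0 ?ln2_gt0 ?entropy_ln_mix_le.
Qed.

End Mixture.
End Entropy.

Section ConvexHull.
Variables (R : realType) (Y : finType) (S : nat) (q : 'I_S -> Y -> R).
Hypotheses (S_gt0 : (0 < S)%N) (q_prob : forall s, is_prob (q s)).

Local Notation hull := (conv_hull q).
Local Notation hull_entropies := [set entropy p | p in hull].
Local Notation vertex_entropies := [set entropy (q s) | s in [set: 'I_S]].
Local Notation mean_entropies :=
  [set \sum_(s < S) b s * entropy (q s) | b in simplex R S].

Let q_ge0 s y : 0 <= q s y := (q_prob s).1 y.
Let q_sum1 s : \sum_y q s y = 1 := (q_prob s).2.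
Let s0 := Ordinal S_gt0.

Lemma simplex_delta s : simplex R S (fun t => (t == s)%:R).
Proof.
split=> [t|]; first exact: ler0n.
by rewrite (bigD1 s) //= eqxx big1 ?addr0 // => t /negbTE ->.
Qed.

Lemma mix_delta s : mix q (fun t => (t == s)%:R) = q s.
Proof.
apply: funext => y; rewrite /mix (bigD1 s) //= eqxx mul1r big1 ?addr0 //.
by move=> t /negbTE ->; rewrite mul0r.
Qed.

Lemma conv_hull_vertex s : hull (q s).
Proof.
by exists (fun t => (t == s)%:R); [exact: simplex_delta | exact: mix_delta].
Qed.

Lemma conv_hull_prob p : hull p -> is_prob p.
Proof. by case=> b b_simplex <-; exact: is_prob_mix. Qed.

Lemma hull_entropies_ub : has_ubound hull_entropies.
Proof.
exists (log2 #|Y|%:R) => _ [p /conv_hull_prob p_prob <-].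
exact: entropy_le_log2_card.
Qed.

Lemma hull_entropies_lb : has_lbound hull_entropies.
Proof. by exists 0 => _ [p /conv_hull_prob p_prob <-]; exact: entropy_ge0. Qed.

Lemma entropy_le_TU p : hull p -> entropy p <= TU hull.
Proof. by move=> hull_p; apply: (ub_le_sup hull_entropies_ub); exists p. Qed.

Lemma mean_entropy_le_TU b :
  simplex R S b -> \sum_s b s * entropy (q s) <= TU hull.
Proof.
move=> b_simplex; apply: le_trans (entropy_mix_ge q_ge0 b_simplex) _.
by apply: entropy_le_TU; exists b.
Qed.

Lemma sup_mean_entropies_le_TU : sup mean_entropies <= TU hull.
Proof.
apply: ge_sup => [|_ [b b_simplex <-]]; last exact: mean_entropy_le_TU.
by eexists; exists (fun s => (s == s0)%:R); first exact: simplex_delta.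
Qed.

Lemma sup_vertex_entropies_le_TU : sup vertex_entropies <= TU hull.
Proof.
apply: ge_sup => [|_ [s _ <-]]; first by exists (entropy (q s0)), s0.
exact/entropy_le_TU/conv_hull_vertex.
Qed.

Lemma TU_conv_hull_le : TU hull <= sup mean_entropies + log2 S%:R.
Proof.
have mean_ub : has_ubound mean_entropies.
  by exists (TU hull) => _ [b b_simplex <-]; exact: mean_entropy_le_TU.
apply: ge_sup => [|_ [_ [b b_simplex <-] <-]].
  by exists (entropy (q s0)), (q s0); first exact: conv_hull_vertex.
apply: le_trans (entropy_mix_le q_ge0 b_simplex q_sum1) _.
apply: lerD; first by apply: (ub_le_sup mean_ub); exists b.
by rewrite -[S in S%:R]card_ord; exact: entropy_le_log2_card.
Qed.

Lemma inf_vertex_entropies_le p : hull p -> inf vertex_entropies <= entropy p.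
Proof.
have vertex_lb : has_lbound vertex_entropies.
  by exists 0 => _ [s _ <-]; exact: entropy_ge0.
case=> b b_simplex <-; apply: le_trans (entropy_mix_ge q_ge0 b_simplex).
rewrite -[X in X <= _]mul1r -b_simplex.2 mulr_suml; apply: ler_sum => s _.
by rewrite ler_wpM2l ?b_simplex.1 //; apply: (ge_inf vertex_lb); exists s.
Qed.

Lemma AU_conv_hull : AU hull = inf vertex_entropies.
Proof.
apply: le_anti; rewrite !lb_le_inf //.
- by exists (entropy (q s0)), (q s0); first exact: conv_hull_vertex.
- by move=> _ [p hull_p <-]; exact: inf_vertex_entropies_le.
- by exists (entropy (q s0)), s0.
- move=> _ [s _ <-]; apply: (ge_inf hull_entropies_lb).
  by exists (q s); first exact: conv_hull_vertex.
Qed.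

Lemma AU_le_TU_conv_hull : AU hull <= TU hull.
Proof.
apply: le_trans (entropy_le_TU (conv_hull_vertex s0)).
apply: (ge_inf hull_entropies_lb).
by exists (q s0); first exact: conv_hull_vertex.
Qed.

End ConvexHull.

Theorem theorem3 (R : realType) (Y : finType) (S : nat)
  (C : set (Y -> R)) (Pex : 'I_S -> Y -> R)
  (hS : (0 < S)%N)
  (hprob : forall s, is_prob (Pex s))
  (hinj : injective Pex)
  (hC : C = conv_hull Pex)
  (hex : [set p | extreme_point C p] = range Pex) :
  let Hlow := inf [set entropy (Pex s) | s in [set: 'I_S]] in
  let Hup := sup [set entropy (Pex s) | s in [set: 'I_S]] in
  let sb := sup [set \sum_(s < S) b s * entropy (Pex s) | b in @simplex R S] in
  let lTU := Num.max sb Hup in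
  (lTU <= TU C <= sb + log2 (S%:R : R)) /\
  AU C = Hlow /\
  (Num.max 0 (lTU - Hlow) <= EU C <= sb + log2 (S%:R : R) - Hlow).
Proof.
move=> Hlow Hup sb lTU; subst C.
have lTU_le_TU : lTU <= TU (conv_hull Pex).
  by rewrite ge_max sup_mean_entropies_le_TU ?sup_vertex_entropies_le_TU.
have TU_le := TU_conv_hull_le hS hprob.
have AU_eq : AU (conv_hull Pex) = Hlow := AU_conv_hull hS hprob.
have Hlow_le_TU : Hlow <= TU (conv_hull Pex) by rewrite -AU_eq AU_le_TU_conv_hull.
split; first by rewrite lTU_le_TU TU_le.
split=> //.
by rewrite /EU AU_eq ge_max subr_ge0 Hlow_le_TU !lerD2r lTU_le_TU TU_le.
Qed.
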